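(* Let $\langle \mathcal{M},\mathcal{R}\rangle$ be a finite reaction network and let $X\subseteq\mathcal{M}$ be a nonempty reactive closed set such that the reactive closed sets contained in $X$ are totally ordered by inclusion, i.e., for any two distinct reactive closed sets $X_1\neq X_2$ with $X_1,X_2\subseteq X$, either $X_1\subset X_2$ or $X_2\subset X_1$. Then there exists a reaction $r\in\mathcal{R}_X$ such that $X=G_{CL}(\mathrm{supp}(r))$.
   Context: A reaction network is a pair $\langle \mathcal{M},\mathcal{R}\rangle$ where $\mathcal{M}$ is a finite set of species and $\mathcal{R}$ is a finite set of reactions, each of the form $\sum_j a_{ij}s_j\to\sum_j b_{ij}s_j$ with $a_{ij},b_{ij}\ge 0$. For a reaction $r$, $\mathrm{supp}(r)=\{s_j: a_{ij}>0\}$ and $\mathrm{prod}(r)=\{s_j: b_{ij}>0\}$; for a set of reactions these denote unions over its reactions. Reactions with empty support (inflows $\emptyset\to s$) are allowed. For $X\subseteq\mathcal{M}$, $\mathcal{R}_X=\{r\in\mathcal{R}:\mathrm{supp}(r)\subseteq X\}$. $X$ is closed if $\mathrm{prod}(\mathcal{R}_X)\subseteq X$. $G_{CL}(Y)$ denotes the smallest closed set containing $Y$. $X$ is reactive if for every $x\in X$ there is $r\in\mathcal{R}_X$ with $x\in\mathrm{supp}(r)\cup\mathrm{prod}(r)$. *)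

From mathcomp Require Import all_boot.
Unset Implicit Arguments. Unset Printing Implicit Defensive.

(* A finite reaction network: species type M, reaction type R (both finite),
   reactant coefficients a r s and product coefficients b r s (naturals). *)
Section RN.
Variables (M R : finType) (a b : R -> M -> nat).

Definition supp (r : R) : {set M} := [set s | 0 < a r s].
Definition prodR (r : R) : {set M} := [set s | 0 < b r s].

Definition RX (X : {set M}) : {set R} := [set r | supp r \subset X].

Definition rn_closed (X : {set M}) : bool :=
  [forall r, (r \in RX X) ==> (prodR r \subset X)].

Definition GCL (Y : {set M}) : {set M} :=
  \bigcap_(Z : {set M} | rn_closed Z && (Y \subset Z)) Z.

Definition reactive (X : {set M}) : bool :=
  [forall x in X, exists r in RX X, x \in supp r :|: prodR r].
End RN.

From mathcomp Require Import all_boot.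
Set Implicit Arguments.

(* Every reactive closed set X is the union of the closures G_CL(supp r) over
   the reactions r of R_X.  These closures are reactive and closed, so under the
   hypothesis they form a chain; the union of a finite nonempty chain is its
   largest member, which gives the reaction r. *)

Lemma bigcup_chain_max (I T : finType) (A : {set I}) (F : I -> {set T}) i0 :
  i0 \in A -> {in A &, forall i j, F i \subset F j \/ F j \subset F i} ->
  exists2 i, i \in A & \bigcup_(j in A) F j = F i.
Proof.
move=> Ai0 chain; have [i Ai maxi] := arg_maxnP (fun i => #|F i|) Ai0.
exists i => //; apply/eqP; rewrite eqEsubset (bigcup_sup i Ai) andbT.
apply/bigcupsP => j Aj; case: (chain i j Ai Aj) => // Fij.
by rewrite -(geq_leqif (subset_leqif_card Fij)); apply: maxi.
Qed.

Section Closure.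
Variables (M R : finType) (a b : R -> M -> nat).

Local Notation supp := (supp M R a).
Local Notation prodR := (prodR M R b).
Local Notation RX := (RX M R a).
Local Notation closed := (rn_closed M R a b).
Local Notation GCL := (GCL M R a b).
Local Notation reactive := (reactive M R a b).

Lemma RX_subset (X Y : {set M}) : X \subset Y -> RX X \subset RX Y.
Proof. by move=> XY; apply/subsetP => r; rewrite !inE => /subset_trans; apply. Qed.

Lemma closed_prodR (X : {set M}) r :
  closed X -> r \in RX X -> prodR r \subset X.
Proof. by move=> /forallP /(_ r) /implyP. Qed.

Lemma GCL_min (Y Z : {set M}) : closed Z -> Y \subset Z -> GCL Y \subset Z.
Proof. by move=> cZ YZ; apply: bigcap_inf; rewrite cZ YZ. Qed.

Lemma subset_GCL (Y : {set M}) : Y \subset GCL Y.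
Proof. by apply/bigcapsP => Z /andP[]. Qed.

Lemma GCL_closed (Y : {set M}) : closed (GCL Y).
Proof.
apply/forallP => r; apply/implyP; rewrite inE => sr.
apply/bigcapsP => Z /andP[cZ YZ]; apply: closed_prodR => //.
by rewrite inE (subset_trans sr (GCL_min cZ YZ)).
Qed.

Lemma supp_in_RX_GCL r : r \in RX (GCL (supp r)).
Proof. by rewrite inE subset_GCL. Qed.

(* The right-hand side is itself closed and contains Y, hence contains G_CL(Y). *)
Lemma GCL_sub_prodR (Y : {set M}) :
  GCL Y \subset Y :|: \bigcup_(r in RX (GCL Y)) prodR r.
Proof.
set C := GCL Y; set C' := Y :|: _.
have C'C : C' \subset C.
  rewrite subUset subset_GCL; apply/bigcupsP => r.
  exact: closed_prodR (GCL_closed Y).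
apply: GCL_min (subsetUl _ _); apply/forallP => r; apply/implyP => rC'.
apply/subsetP => y yp; rewrite inE; apply/orP; right.
by apply/bigcupP; exists r => //; apply: (subsetP (RX_subset C'C)).
Qed.

Lemma GCL_supp_reactive r : reactive (GCL (supp r)).
Proof.
apply/forall_inP => x /(subsetP (GCL_sub_prodR _)).
rewrite inE => /orP[xs | /bigcupP[r' r'C xp]]; apply/exists_inP.
  by exists r; rewrite ?supp_in_RX_GCL // inE xs.
by exists r'; rewrite // inE xp orbT.
Qed.

Lemma reactive_closed_bigcup_GCL (X : {set M}) : reactive X -> closed X ->
  X = \bigcup_(r in RX X) GCL (supp r).
Proof.
move=> reX cX; apply/eqP; rewrite eqEsubset; apply/andP; split.
  apply/subsetP => x /(forall_inP reX) /exists_inP[r rX xr].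
  apply/bigcupP; exists r => //; apply: (subsetP _ x xr).
  rewrite subUset subset_GCL; apply: closed_prodR (GCL_closed _) _.
  exact: supp_in_RX_GCL.
by apply/bigcupsP => r; rewrite inE; apply: GCL_min.
Qed.

Lemma reactive_RX_neq0 (X : {set M}) : X != set0 -> reactive X -> RX X != set0.
Proof.
by case/set0Pn => x /[swap] /forall_inP /[apply] /exists_inP[r rX _]; apply/set0Pn; exists r.
Qed.

End Closure.

Theorem lemma2 (M R : finType) (a b : R -> M -> nat) (X : {set M}) :
  X != set0 -> reactive M R a b X -> rn_closed M R a b X ->
  (forall X1 X2 : {set M},
      reactive M R a b X1 -> rn_closed M R a b X1 -> X1 \subset X ->
      reactive M R a b X2 -> rn_closed M R a b X2 -> X2 \subset X ->
      X1 != X2 -> X1 \proper X2 \/ X2 \proper X1) ->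
  exists2 r, r \in RX M R a X & X = GCL M R a b (supp M R a r).
Proof.
move=> X0 reX cX tot; set G := fun r => GCL M R a b (supp M R a r).
have GX r : r \in RX M R a X -> G r \subset X by rewrite inE; apply: GCL_min.
have chain : {in RX M R a X &, forall r r', G r \subset G r' \/ G r' \subset G r}.
  move=> r r' rX r'X; have [-> | ne] := eqVneq (G r) (G r'); first by left.
  have := tot _ _ (GCL_supp_reactive _ _ _ _ _) (GCL_closed _ _ _ _) (GX _ rX)
    (GCL_supp_reactive _ _ _ _ _) (GCL_closed _ _ _ _) (GX _ r'X) ne.
  by case=> /proper_sub; [left | right].
have /set0Pn[r0 r0X] := @reactive_RX_neq0 M R a b X X0 reX.
have [r rX Gr] := bigcup_chain_max G r0X chain.
by exists r; rewrite // -[RHS]Gr; apply: reactive_closed_bigcup_GCL.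
Qed.
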